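(* For $n\ge1$, $$\left|\Pi_n\wr C_2(1^11^1,1^11^2,1^22^1)\right|=\left|\Pi_n\wr C_2(1^11^2,1^12^1,1^12^2)\right|=\left|\Pi_n\wr C_2(1^11^2,1^12^1,1^22^1)\right|=2n.$$
   Context: For $n\ge0$ let $[n]=\{1,\dots,n\}$. A $2$-colored set partition of $[n]$ is a set partition of $[n]$ together with an assignment of a color from $\{1,2\}$ to each element; $\Pi_n\wr C_2$ is the set of these. For a set $S$ of patterns, $\Pi_n\wr C_2(S)$ is the set of such colored partitions avoiding every pattern in $S$ in the pattern sense. For the patterns used here: $\sigma$ contains $1^11^1$ iff two elements in the same block have the same color; $1^11^2$ iff there are $i<j$ in the same block with $i$ colored $1$ and $j$ colored $2$; $1^12^1$ iff two elements in different blocks have the same color; $1^12^2$ iff there are $i<j$ in different blocks with $i$ colored $1$ and $j$ colored $2$; $1^22^1$ iff there are $i<j$ in different blocks with $i$ colored $2$ and $j$ colored $1$. *)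

From mathcomp Require Import all_boot.
Set Implicit Arguments. Unset Strict Implicit. Unset Printing Implicit Defensive.

(* The ground set [n] = {1,...,n} is represented by 'I_n = {0,...,n-1}
   (order-preserving shift by one).  Colors {1,2} are represented by 'I_2,
   color 1 = ord0 and color 2 = ord_max. *)
Definition col1 : 'I_2 := ord0.
Definition col2 : 'I_2 := ord_max.

Definition colored_partition (n : nat) :=
  ({set {set 'I_n}} * {ffun 'I_n -> 'I_2})%type.

Definition is_colored_partition n (s : colored_partition n) : bool :=
  partition s.1 [set: 'I_n].

Definition same_block n (P : {set {set 'I_n}}) (i j : 'I_n) : bool :=
  [exists B in P, (i \in B) && (j \in B)].

Inductive pattern := p1111 | p1112 | p1121 | p1122 | p1221.
(* p1111 = 1^1 1^1, p1112 = 1^1 1^2, p1121 = 1^1 2^1,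
   p1122 = 1^1 2^2, p1221 = 1^2 2^1 *)

Definition contains n (s : colored_partition n) (p : pattern) : bool :=
  let P := s.1 in let c := s.2 in
  match p with
  | p1111 => [exists i : 'I_n, exists j : 'I_n, (i < j) && same_block P i j && (c i == c j)]
  | p1112 => [exists i : 'I_n, exists j : 'I_n, (i < j) && same_block P i j
                                  && (c i == col1) && (c j == col2)]
  | p1121 => [exists i : 'I_n, exists j : 'I_n, (i < j) && ~~ same_block P i j && (c i == c j)]
  | p1122 => [exists i : 'I_n, exists j : 'I_n, (i < j) && ~~ same_block P i j
                                  && (c i == col1) && (c j == col2)]
  | p1221 => [exists i : 'I_n, exists j : 'I_n, (i < j) && ~~ same_block P i j
                                  && (c i == col2) && (c j == col1)]
  end.

Definition avoids n (S : seq pattern) (s : colored_partition n) : bool :=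
  all (fun p => ~~ contains s p) S.

Definition num_avoiding (n : nat) (S : seq pattern) : nat :=
  #|[set s : colored_partition n | is_colored_partition s && avoids S s]|.

From HB Require Import structures.
From mathcomp Require Import all_boot zify.
Set Implicit Arguments. Unset Strict Implicit. Unset Printing Implicit Defensive.

(* Read a coloring as a predicate b (b i = "i has color 2") and a partition as
   its same-block relation sb; each pattern then forbids certain values of
   (sb i j, b i, b j) for i < j.

   If 1^12^1 is avoided, elements of equal color share a block, so the
   partition is either one block or the two color classes.  With one block,
   avoiding 1^11^2 forces the coloring 2^a 1^(n-a) (n + 1 choices); with the
   two color classes, avoiding 1^12^2 (resp. 1^22^1) forces 2^a 1^(n-a)
   (resp. 1^a 2^(n-a)) with 0 < a < n (n - 1 choices).

   If 1^11^1, 1^11^2 and 1^22^1 are avoided, then for i < j we have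
   sb i j exactly when i has color 2 and j color 1.  Either no such pair
   exists: all blocks are singletons and the coloring is 1^a 2^(n-a)
   (n + 1 choices); or such a pair k < l exists, and transitivity forces
   l = k + 1 and the coloring 1^k 2 1 2^(n-k-2) (n - 1 choices).

   In each case the avoiding colored partitions are thus in bijection with
   'I_(n+1) + 'I_(n-1). *)

Section SameBlock.
Variables (n : nat) (P : {set {set 'I_n}}).

Lemma same_blockC : symmetric (same_block P).
Proof.
by move=> i j; apply/existsP/existsP => -[B /and3P[PB iB jB]]; exists B; rewrite PB iB jB.
Qed.

Hypothesis partP : partition P [set: 'I_n].

Lemma same_blockE i j : same_block P i j = (j \in pblock P i).
Proof.
have [/eqP coverP trivP _] := and3P partP.
apply/existsP/idP => [[B /and3P[PB iB jB]] | jPi]; first by rewrite (def_pblock trivP PB iB).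
by exists (pblock P i); rewrite pblock_mem ?mem_pblock ?coverP ?inE.
Qed.

Lemma same_block_refl : reflexive (same_block P).
Proof.
by move=> i; rewrite same_blockE mem_pblock; case/and3P: partP => /eqP -> _ _; rewrite inE.
Qed.

Lemma same_block_trans : transitive (same_block P).
Proof.
move=> j i k; rewrite !same_blockE => ij jk; case/and3P: partP => _ trivP _.
by rewrite -(same_pblock trivP ij).
Qed.

Lemma equivalence_partition_same_block :
  equivalence_partition (same_block P) [set: 'I_n] = P.
Proof.
rewrite -[RHS](equivalence_partition_pblock partP) /equivalence_partition.
by apply: eq_imset => i; apply/setP => j; rewrite !inE same_blockE.
Qed.

End SameBlock.

Lemma same_block_preim n (T : eqType) (f : 'I_n -> T) i j :
  same_block (preim_partition f [set: 'I_n]) i j = (f i == f j).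
Proof.
rewrite same_blockE ?preim_partitionP // pblock_equivalence_partition ?inE //.
by move=> x y z _ _ _; split=> // /eqP ->.
Qed.

Definition col_of_bool (b : bool) : 'I_2 := if b then col2 else col1.

Lemma col_of_boolK (c : 'I_2) : col_of_bool (c == col2) = c.
Proof. by apply/val_inj; case: c => [[|[|]]]. Qed.

Lemma col_of_bool_eq2 b : (col_of_bool b == col2) = b.
Proof. by case: b. Qed.

Lemma col_of_bool_inj : injective col_of_bool.
Proof. by case; case. Qed.

Lemma col_eq1 (c : 'I_2) : (c == col1) = (c != col2).
Proof. by case: c => [[|[|]]]. Qed.

Lemma col_eq (c d : 'I_2) : (c == d) = ((c == col2) == (d == col2)).
Proof. by case: c => [[|[|]]] //; case: d => [[|[|]]]. Qed.

Lemma pattern_eq_dec : comparable pattern.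
Proof. by rewrite /comparable /decidable; decide equality. Qed.

HB.instance Definition _ := comparableMixin pattern_eq_dec.

Definition admits (p : pattern) (sb ci cj : bool) : bool :=
  match p with
  | p1111 => ~~ (sb && (ci == cj))
  | p1112 => ~~ (sb && ~~ ci && cj)
  | p1121 => ~~ (~~ sb && (ci == cj))
  | p1122 => ~~ (~~ sb && ~~ ci && cj)
  | p1221 => ~~ (~~ sb && ci && ~~ cj)
  end.

Definition pattern_free n p (sb : rel 'I_n) (b : 'I_n -> bool) : Prop :=
  forall i j : 'I_n, i < j -> admits p (sb i j) (b i) (b j).

Lemma not_containsP n (s : colored_partition n) p :
  reflect (pattern_free p (same_block s.1) (fun i => s.2 i == col2)) (~~ contains s p).
Proof.
have -> : contains s p = [exists i : 'I_n, exists j : 'I_n,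
    (i < j) && ~~ admits p (same_block s.1 i j) (s.2 i == col2) (s.2 j == col2)].
  case: p; apply: eq_existsb => i; apply: eq_existsb => j /=;
  move: (same_block _ i j) (s.2 i) (s.2 j) => sb ci cj; rewrite ?col_eq1 ?(col_eq ci cj);
  by case: (i < j); case: sb; case: (ci == col2); case: (cj == col2).
apply: (iffP idP) => [+ i j ij | free].
  by apply: contraR => bad; apply/existsP; exists i; apply/existsP; exists j; rewrite ij.
by apply/existsP => -[i /existsP[j /andP[/free ->]]].
Qed.

Section Encoding.
Variables (n : nat) (S : seq pattern) (D : finType).
Variables (color : D -> 'I_n -> bool) (key : D -> 'I_n -> nat).

Definition key_rel (x : D) : rel 'I_n := [rel i j | key x i == key x j].

Definition encode (x : D) : colored_partition n :=
  (preim_partition (key x) [set: 'I_n], [ffun i => col_of_bool (color x i)]).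

Hypothesis encode_free : forall x p, p \in S -> pattern_free p (key_rel x) (color x).
Hypothesis encode_inj : forall x y, color x =1 color y -> key_rel x =2 key_rel y -> x = y.
Hypothesis encode_onto : forall (sb : rel 'I_n) (b : 'I_n -> bool),
  reflexive sb -> symmetric sb -> transitive sb -> (forall p, p \in S -> pattern_free p sb b) ->
  exists x, b =1 color x /\ sb =2 key_rel x.

Lemma num_avoiding_encode : num_avoiding n S = #|D|.
Proof.
have inj_encode : injective encode.
  move=> x y [eP ec]; apply: encode_inj => [i | i j].
    by move/ffunP: ec => /(_ i); rewrite !ffunE => /col_of_bool_inj.
  by rewrite /key_rel /= -!same_block_preim eP.
rewrite /num_avoiding -cardsT -(card_imset _ inj_encode).
apply: eq_card => s; rewrite inE; apply/andP/imsetP => [[partP avoidP] | [x _ ->]].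
  have [|x [ec eP]] := encode_onto (same_block_refl partP) (@same_blockC _ s.1)
    (same_block_trans partP) (b := fun i => s.2 i == col2).
    by move=> p pS; apply/not_containsP; move/allP: avoidP; apply.
  exists x => //; move: s partP avoidP ec eP => [P c].
  rewrite /is_colored_partition /= => partP _ ec eP; congr pair.
    rewrite -(equivalence_partition_same_block partP) /preim_partition.
    by apply: eq_imset => i; apply/setP => j; rewrite !inE eP.
  by apply/ffunP => i; rewrite ffunE -ec col_of_boolK.
split; first exact: preim_partitionP.
apply/allP => p pS; apply/not_containsP => i j ij /=.
by rewrite same_block_preim !ffunE !col_of_bool_eq2; exact: encode_free.
Qed.

End Encoding.

Section Thresholds.
Variable n : nat.

Lemma ord_wlog_ltn (Q : 'I_n -> 'I_n -> Prop) :
  (forall i j, Q i j -> Q j i) -> (forall i, Q i i) ->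
  (forall i j : 'I_n, i < j -> Q i j) -> forall i j, Q i j.
Proof. by move=> QC Qii Qlt i j; case: (ltngtP i j) => [/Qlt | /Qlt /QC | /val_inj ->]. Qed.

Lemma down_closed_threshold (b : 'I_n -> bool) :
  (forall i j : 'I_n, i < j -> b j -> b i) ->
  exists a : 'I_n.+1, forall i : 'I_n, b i = (i < a).
Proof.
move=> down; pose above_false m := [forall i : 'I_n, (m <= i) ==> ~~ b i].
have above_n : above_false n by apply/forallP => i; rewrite leqNgt ltn_ord.
have [m mP min_m] := ex_minnP (ex_intro above_false n above_n).
have mn : m < n.+1 by exact: min_m.
exists (Ordinal mn) => i /=.
have [im | mi] := ltnP i m; last by move/forallP/(_ i): mP; rewrite mi => /negbTE.
apply: contraTT im => nbi; rewrite -leqNgt; apply: min_m; apply/forallP => j.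
apply/implyP; rewrite leq_eqVlt => /orP[/eqP/val_inj <- // | ij].
by apply: contra nbi; apply: down.
Qed.

Lemma threshold_inj a a' :
  a <= n -> a' <= n -> (forall i : 'I_n, (i < a) = (i < a')) -> a = a'.
Proof.
move=> an a'n eq_a; case: (ltngtP a a') => // [aa' | a'a].
  by have := eq_a (Ordinal (leq_trans aa' a'n)); rewrite /= aa' ltnn.
by have := eq_a (Ordinal (leq_trans a'a an)); rewrite /= a'a ltnn.
Qed.

End Thresholds.

(* A code x stands for the colored partition with coloring [*_color x] whose
   blocks are the fibers of [*_key x].  For [split_*], [inl a] is one block
   colored 2^a 1^(n-a) and [inr k] the two color classes split after position
   k (2 first, or 1 first when [up]).  For [pair_*], [inl a] is all singletons
   colored 1^a 2^(n-a) and [inr k] pairs k with k + 1, colored 1^k 2 1 2^... *)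
Definition code n := ('I_n.+1 + 'I_n.-1)%type.

Lemma card_code n : 0 < n -> #|{: code n}| = 2 * n.
Proof. by move=> n0; rewrite card_sum !card_ord; lia. Qed.

Definition split_color (up : bool) n (x : code n) (i : 'I_n) : bool :=
  match x with inl a => i < a | inr k => if up then k < i else i <= k end.

Definition split_key n (x : code n) (i : 'I_n) : nat :=
  match x with inl _ => 0 | inr k => i <= k end.

Definition pair_color n (x : code n) (i : 'I_n) : bool :=
  match x with inl a => a <= i | inr k => (nat_of_ord i == k) || (k.+1 < i) end.

Definition pair_key n (x : code n) (i : 'I_n) : nat :=
  match x with
  | inl _ => i
  | inr k => if nat_of_ord i == k.+1 then nat_of_ord k else nat_of_ord i
  end.

Lemma code_pred_ltn n (k : 'I_n.-1) : k.+1 < n.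
Proof. by have := ltn_ord k; lia. Qed.

Lemma split_code_inj up n (x y : code n) :
  split_color up x =1 split_color up y -> key_rel (@split_key n) x =2 key_rel (@split_key n) y ->
  x = y.
Proof.
have one_block_not_split (a : 'I_n.+1) (k : 'I_n.-1) :
    ~ key_rel (@split_key n) (inl a) =2 key_rel (@split_key n) (inr k).
  have kn := code_pred_ltn k.
  have [n0 n1] : 0 < n /\ n.-1 < n by lia.
  by move=> /(_ (Ordinal n0) (Ordinal n1)); rewrite /key_rel /=; lia.
case: x y => [a|k] [a'|k'] eq_col eq_key.
- congr inl; apply/val_inj/(@threshold_inj n);
    [exact: ltn_ord a | exact: ltn_ord a' | exact: eq_col].
- by case: (one_block_not_split a k').
- by case: (one_block_not_split a' k) => i j; rewrite eq_key.
- congr inr; apply/val_inj/eq_add_S/(@threshold_inj n); try exact/ltnW/code_pred_ltn.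
  move=> i; rewrite !ltnS; move: (eq_col i); case: up {eq_col} => /=; last by [].
  by rewrite !ltnNge => /negb_inj.
Qed.

Lemma pair_code_inj n (x y : code n) : pair_color x =1 pair_color y -> x = y.
Proof.
have ord_k (k : 'I_n.-1) : k < n by exact/ltnW/code_pred_ltn.
have descent (a : 'I_n.+1) (k : 'I_n.-1) : ~ pair_color (inl a) =1 pair_color (inr k).
  move=> /[dup] /(_ (Ordinal (ord_k k))) + /(_ (Ordinal (code_pred_ltn k))) => /=.
  by rewrite eqxx; lia.
case: x y => [a|k] [a'|k'] eq_col.
- congr inl; apply/val_inj/(@threshold_inj n); [exact: ltn_ord a | exact: ltn_ord a' |].
  by move=> i; rewrite !ltnNge; congr negb; exact: eq_col.
- by case: (descent a k').
- by case: (descent a' k) => i; rewrite eq_col.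
- congr inr; apply/val_inj; move: (eq_col (Ordinal (ord_k k))) (eq_col (Ordinal (ord_k k'))).
  by rewrite /= !eqxx; lia.
Qed.

Section DescentBlock.
Variables (n : nat) (sb : rel 'I_n) (b : 'I_n -> bool).
Hypotheses (sb_sym : symmetric sb) (sb_trans : transitive sb).
Hypothesis sb_ltn : forall i j : 'I_n, i < j -> sb i j = b i && ~~ b j.
Variables (k l : 'I_n).
Hypotheses (kl : k < l) (bk : b k) (nbl : ~~ b l).

Let sb_kl : sb k l. Proof. by rewrite sb_ltn // bk. Qed.

Lemma color_before_descent (i : 'I_n) : i < k -> ~~ b i.
Proof.
move=> ik; apply/negP => bi.
have sil : sb i l by rewrite sb_ltn ?bi // (ltn_trans ik kl).
have : sb i k by apply: (sb_trans sil); rewrite sb_sym.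
by rewrite sb_ltn // bk andbF.
Qed.

Lemma color_after_descent (i : 'I_n) : l < i -> b i.
Proof.
move=> li; apply/negPn/negP => nbi.
have ski : sb k i by rewrite sb_ltn ?bk // (ltn_trans kl li).
have : sb l i by apply: (sb_trans (y := k)); rewrite // sb_sym.
by rewrite sb_ltn // (negbTE nbl).
Qed.

Lemma descent_succ : l = k.+1 :> nat.
Proof.
apply/eqP; rewrite eqn_leq kl andbT leqNgt; apply/negP => gap.
have ik : k.+1 < n := ltn_trans gap (ltn_ord l).
pose i := Ordinal ik.
have [bi | nbi] := boolP (b i).
  have : sb k i by apply: (sb_trans (y := l)); rewrite // sb_sym sb_ltn ?bi //.
  by rewrite sb_ltn /= ?ltnSn // bi andbF.
have : sb i l by apply: (sb_trans (y := k)); rewrite // sb_sym sb_ltn ?bk ?nbi /= ?ltnSn.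
by rewrite sb_ltn // (negbTE nbi).
Qed.

Lemma descent_color (i : 'I_n) : b i = (nat_of_ord i == k) || (l < i).
Proof.
have lk := descent_succ.
have [ik | ki | /val_inj ->] := ltngtP i k; last by rewrite bk.
  by rewrite (negbTE (color_before_descent ik)); lia.
have [il | li | /val_inj ->] := ltngtP i l; first by lia.
  by rewrite color_after_descent // li orbT.
by rewrite (negbTE nbl); lia.
Qed.

End DescentBlock.

Section Classification.
Variables (n : nat) (sb : rel 'I_n) (b : 'I_n -> bool).
Hypotheses (sb_refl : reflexive sb) (sb_sym : symmetric sb) (sb_trans : transitive sb).

Lemma one_block_or_color_classes : pattern_free p1121 sb b ->
  (forall i j, sb i j) \/ sb =2 (fun i j => b i == b j) /\ exists i j, b i && ~~ b j.
Proof.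
move=> free.
have same_color_block i j : b i == b j -> sb i j.
  move: i j; apply: ord_wlog_ltn => [i j + /eqP eq_b | i _ | i j /free /=].
  - by rewrite sb_sym eq_b eqxx => /(_ isT).
  - exact: sb_refl.
  - by case: (sb i j); case: (b i == b j).
have [/existsP[i0 /existsP[j0 not_sb]] | total] := boolP [exists i, exists j, ~~ sb i j];
  last first.
  left => i j; apply: contraNT total => not_sb.
  by apply/existsP; exists i; apply/existsP; exists j.
right; split.
  move=> i j; apply/idP/idP => [sij | /same_color_block //].
  apply: contraNT not_sb => neq_b.
  have block_i k : sb k i.
    have [/same_color_block // | neq_ki] := boolP (b k == b i).
    apply: (sb_trans (y := j)); last by rewrite sb_sym.
    by apply: same_color_block; move: neq_ki neq_b; case: (b k); case: (b i); case: (b j).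
  by apply: (sb_trans (y := i)); rewrite // sb_sym.
have : b i0 != b j0 by apply: contra not_sb; exact: same_color_block.
by case bi0: (b i0); case bj0: (b j0) => // _; [exists i0, j0 | exists j0, i0]; rewrite bi0 bj0.
Qed.

Lemma one_block_split_code up : (forall i j, sb i j) -> pattern_free p1112 sb b ->
  exists x : code n, b =1 split_color up x /\ sb =2 key_rel (@split_key n) x.
Proof.
move=> total free; have [a b_a] : exists a : 'I_n.+1, forall i, b i = (i < a).
  by apply: down_closed_threshold => i j /free /=; rewrite total; case: (b i); case: (b j).
by exists (inl a); split=> [i | i j]; rewrite /key_rel /= ?b_a ?total.
Qed.

Lemma split_code_1122 : pattern_free p1112 sb b -> pattern_free p1121 sb b ->
  pattern_free p1122 sb b -> exists x, b =1 split_color false x /\ sb =2 key_rel (@split_key n) x.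
Proof.
move=> free1112 free1121 free1122.
have [total | [sb_col [i0 [j0 /andP[bi0 nbj0]]]]] := one_block_or_color_classes free1121.
  exact: one_block_split_code.
have [a b_a] : exists a : 'I_n.+1, forall i, b i = (i < a).
  by apply: down_closed_threshold => i j /free1122 /=; rewrite sb_col; case: (b i); case: (b j).
have ka : a.-1 < n.-1.
  by move: (b_a i0) (b_a j0) (ltn_ord j0); rewrite bi0 (negbTE nbj0); lia.
have a0 : 0 < a by move: (b_a i0); rewrite bi0; lia.
exists (inr (Ordinal ka)); split=> [i | i j]; rewrite /key_rel /= ?sb_col !b_a; lia.
Qed.

Lemma split_code_1221 : pattern_free p1112 sb b -> pattern_free p1121 sb b ->
  pattern_free p1221 sb b -> exists x, b =1 split_color true x /\ sb =2 key_rel (@split_key n) x.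
Proof.
move=> free1112 free1121 free1221.
have [total | [sb_col [i0 [j0 /andP[bi0 nbj0]]]]] := one_block_or_color_classes free1121.
  exact: one_block_split_code.
have [a b_a] : exists a : 'I_n.+1, forall i, ~~ b i = (i < a).
  by apply: down_closed_threshold => i j /free1221 /=; rewrite sb_col; case: (b i); case: (b j).
have ka : a.-1 < n.-1.
  by move: (b_a i0) (b_a j0) (ltn_ord i0); rewrite bi0 nbj0; lia.
have a0 : 0 < a by move: (b_a j0); rewrite nbj0; lia.
have b_a' i : b i = (a <= i) by rewrite -[b i]negbK b_a -leqNgt.
exists (inr (Ordinal ka)); split=> [i | i j]; rewrite /key_rel /= ?sb_col !b_a'; lia.
Qed.

Lemma pair_code_onto : pattern_free p1111 sb b -> pattern_free p1112 sb b ->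
  pattern_free p1221 sb b -> exists x, b =1 pair_color x /\ sb =2 key_rel (@pair_key n) x.
Proof.
move=> free1111 free1112 free1221.
have sb_ltn (i j : 'I_n) : i < j -> sb i j = b i && ~~ b j.
  move=> ij; move: (free1111 i j ij) (free1112 i j ij) (free1221 i j ij) => /=.
  by case: (sb i j); case: (b i); case: (b j).
have sb_key x : (forall i j : 'I_n, i < j -> b i && ~~ b j = key_rel (@pair_key n) x i j) ->
    sb =2 key_rel (@pair_key n) x.
  move=> key_ltn; apply: ord_wlog_ltn => [i j eq_ij | i | i j ij].
  - by rewrite sb_sym eq_ij /key_rel /= eq_sym.
  - by rewrite sb_refl /key_rel /= eqxx.
  - by rewrite sb_ltn ?key_ltn.
have [/existsP[k /existsP[l /and3P[kl bk nbl]]] | no_descent] :=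
  boolP [exists k : 'I_n, exists l : 'I_n, [&& k < l, b k & ~~ b l]].
  have lk := descent_succ sb_sym sb_trans sb_ltn kl bk nbl.
  have b_k := descent_color sb_sym sb_trans sb_ltn kl bk nbl.
  have kn : k < n.-1 by move: (ltn_ord l); lia.
  exists (inr (Ordinal kn)); split => [i | ]; first by rewrite /= b_k lk.
  by apply: sb_key => i j ij; rewrite /key_rel /= !b_k lk; do 2 case: ifP; lia.
have [a b_a] : exists a : 'I_n.+1, forall i, ~~ b i = (i < a).
  apply: down_closed_threshold => i j ij; apply: contra => bi; apply/negPn/negP => nbj.
  by move/negP: no_descent; apply; apply/existsP; exists i; apply/existsP; exists j; rewrite ij bi.
have b_a' i : b i = (a <= i) by rewrite -[b i]negbK b_a -leqNgt.
exists (inl a); split => [i | ]; first exact: b_a'.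
apply: sb_key => i j ij; rewrite /key_rel /= !b_a'; lia.
Qed.

End Classification.

Lemma num_avoiding_1111_1112_1221 n : 0 < n -> num_avoiding n [:: p1111; p1112; p1221] = 2 * n.
Proof.
move=> n0; rewrite -(card_code n0).
apply: (num_avoiding_encode (color := @pair_color n) (key := @pair_key n)).
- move=> x p; rewrite !inE => /or3P[] /eqP -> i j ij; rewrite /key_rel;
    case: x => [a | k] /=; try lia; do 2 case: ifP; lia.
- by move=> x y /pair_code_inj.
- move=> sb b refl sym trans free; apply: pair_code_onto => //;
    by apply: free; rewrite !inE eqxx ?orbT.
Qed.

Lemma num_avoiding_1112_1121_1122 n : 0 < n -> num_avoiding n [:: p1112; p1121; p1122] = 2 * n.
Proof.
move=> n0; rewrite -(card_code n0).
apply: (num_avoiding_encode (color := @split_color false n) (key := @split_key n)).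
- move=> x p; rewrite !inE => /or3P[] /eqP -> i j ij; rewrite /key_rel;
    by case: x => [a | k] /=; lia.
- exact: split_code_inj.
- move=> sb b refl sym trans free; apply: split_code_1122 => //;
    by apply: free; rewrite !inE eqxx ?orbT.
Qed.

Lemma num_avoiding_1112_1121_1221 n : 0 < n -> num_avoiding n [:: p1112; p1121; p1221] = 2 * n.
Proof.
move=> n0; rewrite -(card_code n0).
apply: (num_avoiding_encode (color := @split_color true n) (key := @split_key n)).
- move=> x p; rewrite !inE => /or3P[] /eqP -> i j ij; rewrite /key_rel;
    by case: x => [a | k] /=; lia.
- exact: split_code_inj.
- move=> sb b refl sym trans free; apply: split_code_1221 => //;
    by apply: free; rewrite !inE eqxx ?orbT.
Qed.

Theorem mainTheorem12 (n : nat) : 1 <= n ->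
  num_avoiding n [:: p1111; p1112; p1221] = 2 * n /\
  num_avoiding n [:: p1112; p1121; p1122] = 2 * n /\
  num_avoiding n [:: p1112; p1121; p1221] = 2 * n.
Proof.
move=> n0; split; first exact: num_avoiding_1111_1112_1221.
by split; [exact: num_avoiding_1112_1121_1122 | exact: num_avoiding_1112_1121_1221].
Qed.
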